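(* Let $\mathcal{C}_1\xleftarrow{F}\mathcal{C}_{12}\xrightarrow{G}\mathcal{C}_2$ be a correspondence in $\mathrm{Cats}'$ such that $F$ is an equivalence, and let $F^{-1}$ be a quasi-inverse of $F$. The following are equivalent: (a) the correspondence is admissible; (b) the map $\mathrm{Ob}\,\mathcal{C}_{12}\to\{(c_1,c_2,\psi)\mid c_i\in\mathrm{Ob}\,\mathcal{C}_i,\ \psi:GF^{-1}(c_1)\xrightarrow{\sim}c_2\}$ is bijective. Here the map sends $c$ to $(F(c),G(c),\psi)$, where $\psi:GF^{-1}F(c)\xrightarrow{\sim}G(c)$ is induced by the isomorphism $F^{-1}F(c)\xrightarrow{\sim}c$; (c) the functor $H=(F,G):\mathcal{C}_{12}\to\mathcal{C}_1\times\mathcal{C}_2$ has the following property: for every $c\in\mathcal{C}_{12}$, every isomorphism in $\mathcal{C}_1\times\mathcal{C}_2$ with source $H(c)$ has one and only one lift to an isomorphism in $\mathcal{C}_{12}$ with source $c$.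
   Context: $\mathrm{Cats}'$ is the naive 1-category of small categories, whose morphisms are functors on the nose. A correspondence from $\mathcal{C}_1$ to $\mathcal{C}_2$ is a diagram $\mathcal{C}_1\xleftarrow{F}\mathcal{C}_{12}\xrightarrow{G}\mathcal{C}_2$ in $\mathrm{Cats}'$. A morphism of correspondences is a functor $H$ between middle terms with $F'H=F$, $G'H=G$ on the nose. For a functor $\Phi:\mathcal{C}_1\to\mathcal{C}_2$, $\mathrm{Graph}(\Phi)$ is the correspondence $\mathcal{C}_1\leftarrow\mathrm{Graph}_\Phi\to\mathcal{C}_2$. Here $\mathrm{Graph}_\Phi$ is the category of triples $(c_1,c_2,\psi)$ with $\psi:\Phi(c_1)\xrightarrow{\sim}c_2$, and the arrows are the projections. A correspondence is admissible if it is isomorphic (as a correspondence) to $\mathrm{Graph}(\Phi)$ for some functor $\Phi:\mathcal{C}_1\to\mathcal{C}_2$. *)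

From Stdlib Require Import ProofIrrelevance.

Set Implicit Arguments.
Unset Strict Implicit.

Record Cat := {
  Ob :> Type;
  Hom : Ob -> Ob -> Type;
  idm : forall a, Hom a a;
  comp : forall a b c, Hom b c -> Hom a b -> Hom a c;
  comp_id_l : forall a b (f : Hom a b), comp (idm b) f = f;
  comp_id_r : forall a b (f : Hom a b), comp f (idm a) = f;
  comp_assoc : forall a b c d (f : Hom a b) (g : Hom b c) (h : Hom c d),
      comp h (comp g f) = comp (comp h g) f }.
Arguments Hom {C} a b : rename.
Arguments idm {C} a : rename.
Arguments comp {C a b c} g f : rename.

Definition is_iso (C : Cat) (a b : C) (f : Hom a b) : Prop :=
  exists g : Hom b a, comp g f = idm a /\ comp f g = idm b.
Arguments is_iso {C a b} f.

Record Functor (C D : Cat) := {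
  fobj :> Ob C -> Ob D;
  fmap : forall a b, Hom a b -> Hom (fobj a) (fobj b);
  fmap_id : forall a, fmap (idm a) = idm (fobj a);
  fmap_comp : forall a b c (f : Hom a b) (g : Hom b c),
      fmap (comp g f) = comp (fmap g) (fmap f) }.
Arguments fmap {C D} F {a b} f : rename.

Definition Fid (C : Cat) : Functor C C.
Proof.
  refine {| fobj := fun x => x; fmap := fun a b f => f |}; reflexivity.
Defined.

Definition Fcomp (C D E : Cat) (G : Functor D E) (F : Functor C D) : Functor C E.
Proof.
  refine {| fobj := fun x => G (F x); fmap := fun a b f => fmap G (fmap F f) |}.
  - intro a. rewrite !fmap_id. reflexivity.
  - intros a b c f g. rewrite !fmap_comp. reflexivity.
Defined.

Definition hom_cast (C : Cat) (a a' b b' : C) (ea : a = a') (eb : b = b')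
  (f : Hom a b) : Hom a' b' :=
  match ea in _ = x, eb in _ = y return Hom x y with eq_refl, eq_refl => f end.

Definition functor_eq (C D : Cat) (F G : Functor C D) : Prop :=
  exists e : (forall x, F x = G x),
    forall a b (f : Hom a b), hom_cast (e a) (e b) (fmap F f) = fmap G f.

Record NatTrans (C D : Cat) (F G : Functor C D) := {
  nt :> forall x, Hom (F x) (G x);
  nt_nat : forall a b (f : Hom a b), comp (fmap G f) (nt a) = comp (nt b) (fmap F f) }.

Definition is_natiso (C D : Cat) (F G : Functor C D) (eta : NatTrans F G) : Prop :=
  forall x, is_iso (eta x).

Lemma fmap_iso (C D : Cat) (F : Functor C D) (a b : C) (f : Hom a b) :
  is_iso f -> is_iso (fmap F f).
Proof.
  intros [g [H1 H2]]. exists (fmap F g).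
  rewrite <- !fmap_comp, H1, H2, !fmap_id. split; reflexivity.
Qed.

Definition ProdCat (C1 C2 : Cat) : Cat.
Proof.
  refine {| Ob := (Ob C1 * Ob C2)%type;
            Hom := fun x y => (Hom (fst x) (fst y) * Hom (snd x) (snd y))%type;
            idm := fun x => (idm (fst x), idm (snd x));
            comp := fun a b c g f => (comp (fst g) (fst f), comp (snd g) (snd f)) |}.
  - intros a b [f1 f2]; simpl. rewrite !comp_id_l. reflexivity.
  - intros a b [f1 f2]; simpl. rewrite !comp_id_r. reflexivity.
  - intros a b c d [f1 f2] [g1 g2] [h1 h2]; simpl. rewrite !comp_assoc. reflexivity.
Defined.

Definition Fpair (C C1 C2 : Cat) (F : Functor C C1) (G : Functor C C2) :
  Functor C (ProdCat C1 C2).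
Proof.
  refine {| fobj := fun x => (F x, G x) : Ob (ProdCat C1 C2);
            fmap := fun a b f => (fmap F f, fmap G f) : Hom (C := ProdCat C1 C2) (F a, G a) (F b, G b) |}.
  - intro a. simpl. rewrite !fmap_id. reflexivity.
  - intros a b c f g. simpl. rewrite !fmap_comp. reflexivity.
Defined.

Record GOb (C1 C2 : Cat) (Phi : Functor C1 C2) := {
  g1 : Ob C1; g2 : Ob C2; gpsi : Hom (Phi g1) g2; gpsi_iso : is_iso gpsi }.

Record GHom (C1 C2 : Cat) (Phi : Functor C1 C2) (x y : GOb Phi) := {
  h1 : Hom (g1 x) (g1 y);
  h2 : Hom (g2 x) (g2 y);
  hcomm : comp (gpsi y) (fmap Phi h1) = comp h2 (gpsi x) }.
Arguments h1 {C1 C2 Phi x y} h : rename.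
Arguments h2 {C1 C2 Phi x y} h : rename.

Lemma GHom_eq (C1 C2 : Cat) (Phi : Functor C1 C2) (x y : GOb Phi) (f g : GHom x y) :
  h1 f = h1 g -> h2 f = h2 g -> f = g.
Proof.
  destruct f as [f1 f2 fc], g as [g1 g2 gc]; simpl; intros E1 E2.
  subst. rewrite (proof_irrelevance _ fc gc). reflexivity.
Qed.

Definition GId (C1 C2 : Cat) (Phi : Functor C1 C2) (x : GOb Phi) : GHom x x.
Proof.
  refine {| h1 := idm (g1 x); h2 := idm (g2 x) |}.
  rewrite fmap_id, comp_id_l, comp_id_r. reflexivity.
Defined.

Definition GComp (C1 C2 : Cat) (Phi : Functor C1 C2) (x y z : GOb Phi)
  (g : GHom y z) (f : GHom x y) : GHom x z.
Proof.
  refine {| h1 := comp (h1 g) (h1 f); h2 := comp (h2 g) (h2 f) |}.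
  rewrite fmap_comp, comp_assoc, (hcomm g), <- comp_assoc, (hcomm f), comp_assoc.
  reflexivity.
Defined.

Definition GraphCat (C1 C2 : Cat) (Phi : Functor C1 C2) : Cat.
Proof.
  refine {| Ob := GOb Phi; Hom := @GHom C1 C2 Phi;
            idm := @GId C1 C2 Phi; comp := @GComp C1 C2 Phi |}.
  - intros a b f. apply GHom_eq; simpl; apply comp_id_l.
  - intros a b f. apply GHom_eq; simpl; apply comp_id_r.
  - intros a b c d f g h. apply GHom_eq; simpl; apply comp_assoc.
Defined.

Definition Gproj1 (C1 C2 : Cat) (Phi : Functor C1 C2) : Functor (GraphCat Phi) C1.
Proof.
  refine {| fobj := fun x : Ob (GraphCat Phi) => g1 x; fmap := fun a b (f : Hom (C := GraphCat Phi) a b) => h1 f |};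
  reflexivity.
Defined.

Definition Gproj2 (C1 C2 : Cat) (Phi : Functor C1 C2) : Functor (GraphCat Phi) C2.
Proof.
  refine {| fobj := fun x : Ob (GraphCat Phi) => g2 x; fmap := fun a b (f : Hom (C := GraphCat Phi) a b) => h2 f |};
  reflexivity.
Defined.

Definition corr_iso (C1 C2 X Y : Cat)
  (F : Functor X C1) (G : Functor X C2) (F' : Functor Y C1) (G' : Functor Y C2) : Prop :=
  exists (K : Functor X Y) (L : Functor Y X),
    functor_eq (Fcomp F' K) F /\ functor_eq (Fcomp G' K) G /\
    functor_eq (Fcomp F L) F' /\ functor_eq (Fcomp G L) G' /\
    functor_eq (Fcomp L K) (Fid X) /\ functor_eq (Fcomp K L) (Fid Y).

Definition admissible (C1 C2 C12 : Cat) (F : Functor C12 C1) (G : Functor C12 C2) : Prop :=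
  exists Phi : Functor C1 C2, corr_iso F G (Gproj1 Phi) (Gproj2 Phi).

Definition bijective (A B : Type) (f : A -> B) : Prop :=
  (forall x y, f x = f y -> x = y) /\ (forall y, exists x, f x = y).

Definition triples (C1 C2 C12 : Cat) (G : Functor C12 C2) (Finv : Functor C1 C12) : Type :=
  { c1 : Ob C1 & { c2 : Ob C2 & { psi : Hom (G (Finv c1)) c2 | is_iso psi } } }.

Definition triple_map (C1 C2 C12 : Cat) (F : Functor C12 C1) (G : Functor C12 C2)
  (Finv : Functor C1 C12) (alpha : NatTrans (Fcomp Finv F) (Fid C12))
  (halpha : is_natiso alpha) (c : Ob C12) : triples G Finv :=
  existT _ (F c) (existT _ (G c)
    (exist _ (fmap G (alpha c)) (fmap_iso G (halpha c)))).

Definition lifts (C D : Cat) (H : Functor C D) (c : C) (d : D) (u : Hom (H c) d)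
  (c' : C) (v : Hom c c') : Prop :=
  exists e : H c' = d, hom_cast eq_refl e (fmap H v) = u.

Arguments lifts {C D H c d} u {c'} v.

Definition unique_iso_lifting (C D : Cat) (H : Functor C D) : Prop :=
  forall (c : C) (d : D) (u : Hom (H c) d), is_iso u ->
    exists (c' : C) (v : Hom c c'),
      is_iso v /\ lifts u v /\
      forall (c'' : C) (v' : Hom c c''), is_iso v' -> lifts u v' ->
        existT (fun x => Hom c x) c'' v' = existT (fun x => Hom c x) c' v.

From Stdlib Require Import ProofIrrelevance FunctionalExtensionality ClassicalEpsilon.

Set Implicit Arguments.
Unset Strict Implicit.

(* Since F is an equivalence, the comparison functor K : C12 -> Graph(G F^{-1}),
   c |-> (F c, G c, G(alpha_c)), is fully faithful and essentially surjective,
   H = (F, G) factors as P K with P the pair of graph projections, and the map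
   of (b) is the object map of K.  Being fully faithful, K is an isomorphism of
   categories as soon as it is bijective on objects: (b) => (a).  P lifts
   isomorphisms uniquely, hence so does P K' for every isomorphism of
   categories K', and an isomorphism of correspondences to a graph puts H in
   this form: (a) => (c).  Conversely, if P K lifts isomorphisms uniquely, then
   lifting an isomorphism K c ~ t along P K and comparing with its unique lift
   along P shows that t is in the image of K, and lifting an identity along P K
   shows that K is injective on objects: (c) => (b). *)

(* Morphisms are compared in the total space of arrows: this states equations
   between morphisms whose endpoints are only propositionally equal (such as
   alpha_x and alpha_y when F x = F y) without casts. *)
Definition arrow (C : Cat) : Type := {ab : Ob C * Ob C & Hom (fst ab) (snd ab)}.

Definition arr (C : Cat) (a b : C) (f : Hom a b) : arrow C :=
  existT (fun ab : Ob C * Ob C => Hom (fst ab) (snd ab)) (a, b) f.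

Definition arr_src (C : Cat) (v : arrow C) : C := fst (projT1 v).

Definition arr_is_iso (C : Cat) (v : arrow C) : Prop := is_iso (projT2 v).

Definition arr_map (C D : Cat) (M : Functor C D) (v : arrow C) : arrow D :=
  arr (fmap M (projT2 v)).

Lemma arr_inj (C : Cat) (a b : C) (f f' : Hom a b) : arr f = arr f' -> f = f'.
Proof. exact (inj_pair2 _ _ _ _ _). Qed.

Lemma arr_ends (C : Cat) (a b a' b' : C) (f : Hom a b) (f' : Hom a' b') :
  arr f = arr f' -> a = a' /\ b = b'.
Proof. intro E. apply (f_equal (@projT1 _ _)) in E. injection E. auto. Qed.

Lemma arr_transport (C : Cat) (a b a' b' : C) (f : Hom a b) :
  a = a' -> b = b' -> exists f' : Hom a' b', arr f' = arr f.
Proof. intros <- <-. exists f. reflexivity. Qed.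

Lemma arr_hom_cast (C : Cat) (a b a' b' : C) (ea : a = a') (eb : b = b') (f : Hom a b) :
  arr (hom_cast ea eb f) = arr f.
Proof. destruct ea, eb. reflexivity. Qed.

Lemma arr_is_iso_eq (C : Cat) (a b a' b' : C) (f : Hom a b) (f' : Hom a' b') :
  arr f = arr f' -> is_iso f -> is_iso f'.
Proof.
  intro E. destruct (arr_ends E) as [Ea Eb]. subst a' b'.
  rewrite (arr_inj E). trivial.
Qed.

Lemma arr_fmap (C D : Cat) (M : Functor C D) (a b a' b' : C) (f : Hom a b) (f' : Hom a' b') :
  arr f = arr f' -> arr (fmap M f) = arr (fmap M f').
Proof.
  intro E. destruct (arr_ends E) as [Ea Eb]. subst a' b'.
  rewrite (arr_inj E). reflexivity.
Qed.

Lemma arr_comp (C : Cat) (a b c a' b' c' : C) (f : Hom a b) (g : Hom b c)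
  (f' : Hom a' b') (g' : Hom b' c') :
  arr f = arr f' -> arr g = arr g' -> arr (comp g f) = arr (comp g' f').
Proof.
  intros Ef Eg. destruct (arr_ends Ef) as [Ea Eb], (arr_ends Eg) as [_ Ec].
  subst a' b' c'. rewrite (arr_inj Ef), (arr_inj Eg). reflexivity.
Qed.

Lemma arr_map_id (C : Cat) (v : arrow C) : arr_map (Fid C) v = v.
Proof. destruct v as [[a b] f]. reflexivity. Qed.

Lemma idm_is_iso (C : Cat) (a : C) : is_iso (idm a).
Proof. exists (idm a). split; apply comp_id_l. Qed.

Lemma iso_comp (C : Cat) (a b c : C) (f : Hom a b) (g : Hom b c) :
  is_iso f -> is_iso g -> is_iso (comp g f).
Proof.
  intros [i [Hi Hi']] [j [Hj Hj']]. exists (comp i j). split.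
  - rewrite <- !comp_assoc, (comp_assoc f g j), Hj, comp_id_l. exact Hi.
  - rewrite <- !comp_assoc, (comp_assoc j i f), Hi', comp_id_l. exact Hj'.
Qed.

Lemma iso_cancel_r (C : Cat) (a b c : C) (f : Hom a b) (g g' : Hom b c) :
  is_iso f -> comp g f = comp g' f -> g = g'.
Proof.
  intros [i [_ Hi]] E.
  rewrite <- (comp_id_r g), <- (comp_id_r g'), <- Hi, !comp_assoc, E. reflexivity.
Qed.

Lemma iso_cancel_l (C : Cat) (a b c : C) (f : Hom b c) (g g' : Hom a b) :
  is_iso f -> comp f g = comp f g' -> g = g'.
Proof.
  intros [i [Hi _]] E.
  rewrite <- (comp_id_l g), <- (comp_id_l g'), <- Hi, <- !comp_assoc, E. reflexivity.
Qed.

Lemma prod_is_iso (D1 D2 : Cat) (a b : ProdCat D1 D2) (f : Hom a b) :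
  is_iso f -> is_iso (fst f) /\ is_iso (snd f).
Proof.
  destruct f as [f1 f2]. intros [[i1 i2] [Hi Hi']]. simpl in *.
  injection Hi as Hi1 Hi2. injection Hi' as Hi1' Hi2'.
  split; [exists i1 | exists i2]; split; assumption.
Qed.

Lemma graph_hom_iso (C1 C2 : Cat) (Phi : Functor C1 C2) (x y : GOb Phi) (f : GHom x y) :
  is_iso (h1 f) -> is_iso (h2 f) -> is_iso (C := GraphCat Phi) f.
Proof.
  intros [i1 [Hi1 Hi1']] [i2 [Hi2 Hi2']].
  assert (Hcomm : comp (gpsi x) (fmap Phi i1) = comp i2 (gpsi y)).
  { rewrite <- (comp_id_l (comp (gpsi x) (fmap Phi i1))), <- Hi2, <- comp_assoc.
    rewrite (comp_assoc (fmap Phi i1) (gpsi x) (h2 f)), <- (hcomm f).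
    rewrite <- comp_assoc, <- fmap_comp, Hi1', fmap_id, comp_id_r. reflexivity. }
  exists {| h1 := i1; h2 := i2; hcomm := Hcomm |}.
  split; apply GHom_eq; assumption.
Qed.

Lemma eq_of_functor_eq (C D : Cat) (F G : Functor C D) : functor_eq F G -> F = G.
Proof.
  destruct F as [fo fm fi fc], G as [go gm gi gc]. intros [e He]. simpl in *.
  assert (fo = go) by (apply functional_extensionality; exact e). subst go.
  assert (Erefl : forall x, e x = eq_refl) by (intro; apply proof_irrelevance).
  assert (fm = gm).
  { apply functional_extensionality_dep; intro a.
    apply functional_extensionality_dep; intro b.
    apply functional_extensionality; intro f.
    specialize (He a b f). rewrite !Erefl in He. exact He. }
  subst gm. f_equal; apply proof_irrelevance.
Qed.

Lemma functor_eq_refl (C D : Cat) (F : Functor C D) : functor_eq F F.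
Proof. exists (fun _ => eq_refl). reflexivity. Qed.

Lemma functor_ext (C D : Cat) (F G : Functor C D) :
  (forall x, F x = G x) -> (forall a b (f : Hom a b), arr (fmap F f) = arr (fmap G f)) ->
  F = G.
Proof.
  intros Eob Ehom. apply eq_of_functor_eq. exists Eob. intros a b f.
  apply arr_inj. rewrite arr_hom_cast. apply Ehom.
Qed.

Lemma Fcomp_assoc (B C D E : Cat) (F : Functor B C) (G : Functor C D) (H : Functor D E) :
  Fcomp H (Fcomp G F) = Fcomp (Fcomp H G) F.
Proof. apply functor_ext; reflexivity. Qed.

Lemma Fcomp_Fid_r (C D : Cat) (F : Functor C D) : Fcomp F (Fid C) = F.
Proof. apply functor_ext; reflexivity. Qed.

Lemma Fpair_Fcomp (B C C1 C2 : Cat) (F1 : Functor C C1) (F2 : Functor C C2)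
  (K : Functor B C) :
  Fcomp (Fpair F1 F2) K = Fpair (Fcomp F1 K) (Fcomp F2 K).
Proof. apply functor_ext; reflexivity. Qed.

Definition faithful (C D : Cat) (K : Functor C D) : Prop :=
  forall a b (f f' : Hom a b), fmap K f = fmap K f' -> f = f'.

Definition full (C D : Cat) (K : Functor C D) : Prop :=
  forall a b (g : Hom (K a) (K b)), exists f, fmap K f = g.

Definition essentially_surjective (C D : Cat) (K : Functor C D) : Prop :=
  forall d : D, exists (c : C) (i : Hom (K c) d), is_iso i.

Definition cat_inverse (C D : Cat) (K : Functor C D) (L : Functor D C) : Prop :=
  Fcomp L K = Fid C /\ Fcomp K L = Fid D.

Lemma full_faithful_reflects_iso (C D : Cat) (K : Functor C D) :
  full K -> faithful K -> forall a b (f : Hom a b), is_iso (fmap K f) -> is_iso f.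
Proof.
  intros Kfull Kfaith a b f [g [Hg Hg']]. destruct (Kfull b a g) as [i <-].
  exists i. split; apply Kfaith; rewrite fmap_comp, fmap_id; assumption.
Qed.

Lemma faithful_arr (C D : Cat) (K : Functor C D) :
  faithful K -> forall (a b a' b' : C) (f : Hom a b) (f' : Hom a' b'),
  a = a' -> b = b' -> arr (fmap K f) = arr (fmap K f') -> arr f = arr f'.
Proof.
  intros Kfaith a b a' b' f f' Ea Eb E. subst a' b'.
  rewrite (Kfaith _ _ _ _ (arr_inj E)). reflexivity.
Qed.

Lemma full_arr (C D : Cat) (K : Functor C D) :
  full K -> forall (a b : C) (c d : D) (g : Hom c d),
  K a = c -> K b = d -> exists f : Hom a b, arr (fmap K f) = arr g.
Proof.
  intros Kfull a b c d g Ea Eb. subst c d.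
  destruct (Kfull a b g) as [f <-]. exists f. reflexivity.
Qed.

Section InverseFunctor.
Variables (C D : Cat) (K : Functor C D).
Hypotheses (K_bij : bijective (fobj K)) (K_full : full K) (K_faithful : faithful K).

Definition inverse_ob (d : D) : C :=
  proj1_sig (constructive_indefinite_description _ (proj2 K_bij d)).

Lemma K_inverse_ob (d : D) : K (inverse_ob d) = d.
Proof. exact (proj2_sig (constructive_indefinite_description _ (proj2 K_bij d))). Qed.

Definition inverse_hom (d d' : D) (g : Hom d d') : Hom (inverse_ob d) (inverse_ob d') :=
  proj1_sig (constructive_indefinite_description _
    (full_arr K_full g (K_inverse_ob d) (K_inverse_ob d'))).

Lemma K_inverse_hom (d d' : D) (g : Hom d d') : arr (fmap K (inverse_hom g)) = arr g.
Proof.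
  exact (proj2_sig (constructive_indefinite_description _
    (full_arr K_full g (K_inverse_ob d) (K_inverse_ob d')))).
Qed.

Definition inverse_functor : Functor D C.
Proof.
  refine {| fobj := inverse_ob; fmap := inverse_hom |}.
  - intro d. apply K_faithful, arr_inj.
    rewrite K_inverse_hom, fmap_id, K_inverse_ob. reflexivity.
  - intros a b c f g. apply K_faithful, arr_inj.
    rewrite K_inverse_hom, fmap_comp. apply arr_comp; symmetry; apply K_inverse_hom.
Defined.

Lemma inverse_functor_cat_inverse : cat_inverse K inverse_functor.
Proof.
  assert (LK : forall c, inverse_ob (K c) = c).
  { intro c. apply (proj1 K_bij), K_inverse_ob. }
  split; apply functor_ext.
  - exact LK.
  - intros a b f. apply (faithful_arr K_faithful (LK a) (LK b)), K_inverse_hom.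
  - exact K_inverse_ob.
  - intros a b f. apply K_inverse_hom.
Qed.

End InverseFunctor.

Definition lifts_isos_uniquely (C D : Cat) (H : Functor C D) : Prop :=
  forall (c : C) (u : arrow D), arr_src u = H c -> arr_is_iso u ->
  exists! v : arrow C, arr_src v = c /\ arr_is_iso v /\ arr_map H v = u.

Lemma lifts_arr (C D : Cat) (H : Functor C D) (c : C) (d : D) (u : Hom (H c) d)
  (c' : C) (v : Hom c c') :
  lifts u v <-> arr (fmap H v) = arr u.
Proof.
  split.
  - intros [e He]. subst d. simpl in He. subst u. reflexivity.
  - intro E. destruct (arr_ends E) as [_ e]. subst d.
    exists eq_refl. exact (arr_inj E).
Qed.

Lemma existT_arr (C : Cat) (c c' c'' : C) (v : Hom c c') (v' : Hom c c'') :
  existT (fun x => Hom c x) c'' v' = existT (fun x => Hom c x) c' v <-> arr v' = arr v.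
Proof.
  split.
  - intro E. exact (f_equal (fun s => arr (projT2 s)) E).
  - intro E. destruct (arr_ends E) as [_ e]. subst c''.
    rewrite (arr_inj E). reflexivity.
Qed.

Lemma unique_iso_liftingE (C D : Cat) (H : Functor C D) :
  unique_iso_lifting H <-> lifts_isos_uniquely H.
Proof.
  split.
  - intros HU c [[a d] u] Hsrc Hu. cbn in Hsrc, u. subst a.
    destruct (HU c d u Hu) as [c' [v [Hv [Hl Huniq]]]].
    exists (arr v). split.
    + split; [reflexivity|]. split; [exact Hv|]. apply lifts_arr, Hl.
    + intros [[a' b'] v'] [Hsrc' [Hv' Hm]]. cbn in Hsrc', v'. subst a'.
      symmetry. apply existT_arr, Huniq; [exact Hv'|]. apply lifts_arr, Hm.
  - intros HL c d u Hu.
    destruct (HL c (arr u) eq_refl Hu) as [[[a c'] v] [[Hsrc [Hv Hm]] Huniq]].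
    cbn in Hsrc, v. subst a.
    exists c', v. split; [exact Hv|]. split; [apply lifts_arr, Hm|].
    intros c'' v' Hv' Hl. apply existT_arr. symmetry. apply Huniq.
    split; [reflexivity|]. split; [exact Hv'|]. apply lifts_arr, Hl.
Qed.

Lemma graph_lifts_isos_uniquely (C1 C2 : Cat) (Phi : Functor C1 C2) :
  lifts_isos_uniquely (Fpair (Gproj1 Phi) (Gproj2 Phi)).
Proof.
  intros c [[a [d1 d2]] [u1 u2]] Hsrc Hu. cbn in Hsrc. subst a. cbn in u1, u2.
  destruct (prod_is_iso Hu) as [Hu1 Hu2]. cbn in Hu1, Hu2.
  destruct Hu1 as [i1 [Hi1 Hi1']].
  (* The structure isomorphism of the target is forced: u2 o gpsi c o Phi(u1^-1). *)
  set (psi := comp u2 (comp (gpsi c) (fmap Phi i1))).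
  assert (Hpsi : is_iso psi).
  { apply iso_comp; [apply iso_comp|exact Hu2].
    - apply fmap_iso. exists u1. split; assumption.
    - apply gpsi_iso. }
  assert (Hcomm : comp psi (fmap Phi u1) = comp u2 (gpsi c)).
  { unfold psi. rewrite <- !comp_assoc, <- fmap_comp, Hi1, fmap_id, comp_id_r.
    reflexivity. }
  pose (c' := {| g1 := d1; g2 := d2; gpsi := psi; gpsi_iso := Hpsi |}).
  pose (v := @Build_GHom C1 C2 Phi c c' u1 u2 Hcomm).
  exists (arr (C := GraphCat Phi) v). split.
  - split; [reflexivity|]. split; [|reflexivity].
    apply graph_hom_iso; [exists i1; split|]; assumption.
  - intros [[c0 y] w] [Hsrc' [_ Hm]]. cbn in Hsrc', w. subst c0.
    destruct y as [y1 y2 psiy Hpsiy].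
    destruct (arr_ends Hm) as [_ Ey]. injection Ey as Ey1 Ey2. subst y1 y2.
    apply arr_inj in Hm. injection Hm as Hw1 Hw2.
    assert (Epsi : psiy = psi).
    { apply (iso_cancel_r (fmap_iso Phi (f := u1) (ex_intro _ i1 (conj Hi1 Hi1')))).
      rewrite Hcomm, <- Hw1, <- Hw2. exact (hcomm w). }
    subst psiy. assert (Ep : Hpsiy = Hpsi) by apply proof_irrelevance. subst Hpsiy.
    apply f_equal, GHom_eq; symmetry; assumption.
Qed.

Lemma lifts_isos_uniquely_comp_inverse (C D E : Cat) (P : Functor D E) (K : Functor C D)
  (L : Functor D C) :
  lifts_isos_uniquely P -> cat_inverse K L -> lifts_isos_uniquely (Fcomp P K).
Proof.
  intros HP [LK KL] c u Hsrc Hu.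
  destruct (HP (K c) u Hsrc Hu) as [v [[Hv_src [Hv_iso Hv_map]] Huniq]].
  exists (arr_map L v). split.
  - split.
    { change (L (arr_src v) = c). rewrite Hv_src.
      exact (f_equal (fun M => fobj M c) LK). }
    split; [exact (fmap_iso L Hv_iso)|].
    change (arr_map P (arr_map (Fcomp K L) v) = u). rewrite KL, arr_map_id. exact Hv_map.
  - intros w [Hw_src [Hw_iso Hw_map]].
    assert (Ew : v = arr_map K w).
    { apply Huniq. split; [|split; [exact (fmap_iso K Hw_iso)|exact Hw_map]].
      change (K (arr_src w) = K c). rewrite Hw_src. reflexivity. }
    rewrite Ew. change (arr_map (Fcomp L K) w = w). rewrite LK. apply arr_map_id.
Qed.

Section LiftingThroughFactor.
Variables (C D D' : Cat) (P : Functor D D') (K : Functor C D).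

Lemma injective_of_lifts_isos_uniquely :
  lifts_isos_uniquely (Fcomp P K) -> full K -> faithful K ->
  forall c c', K c = K c' -> c = c'.
Proof.
  intros HPK K_full K_faithful c c' E.
  destruct (arr_transport (idm (K c)) eq_refl E) as [f Hf].
  destruct (K_full c c' f) as [w Hw].
  assert (Hw_iso : is_iso w).
  { apply (full_faithful_reflects_iso K_full K_faithful). rewrite Hw.
    exact (arr_is_iso_eq (eq_sym Hf) (idm_is_iso _)). }
  destruct (HPK c (arr (idm (P (K c)))) eq_refl (idm_is_iso _)) as [v [_ Huniq]].
  assert (Ew : v = arr w).
  { apply Huniq. split; [reflexivity|]. split; [exact Hw_iso|].
    change (arr (fmap P (fmap K w)) = arr (idm (P (K c)))).
    rewrite Hw, <- fmap_id. apply arr_fmap, Hf. }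
  assert (Eid : v = arr (idm c)).
  { apply Huniq. split; [reflexivity|]. split; [apply idm_is_iso|].
    change (arr (fmap P (fmap K (idm c))) = arr (idm (P (K c)))).
    rewrite !fmap_id. reflexivity. }
  rewrite Ew in Eid. symmetry. exact (proj2 (arr_ends Eid)).
Qed.

Lemma surjective_of_lifts_isos_uniquely :
  lifts_isos_uniquely P -> lifts_isos_uniquely (Fcomp P K) -> essentially_surjective K ->
  forall d, exists c, K c = d.
Proof.
  intros HP HPK K_esurj d. destruct (K_esurj d) as [c [i Hi]].
  destruct (HPK c (arr (fmap P i)) eq_refl (fmap_iso P Hi))
    as [[[c0 c'] v] [[Hv_src [Hv_iso Hv_map]] _]].
  cbn in Hv_src, v. subst c0.
  destruct (HP (K c) (arr (fmap P i)) eq_refl (fmap_iso P Hi)) as [w [_ Huniq]].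
  assert (E : arr (fmap K v) = arr i).
  { transitivity w; [symmetry|]; apply Huniq.
    - split; [reflexivity|]. split; [exact (fmap_iso K Hv_iso)|exact Hv_map].
    - split; [reflexivity|]. split; [exact Hi|reflexivity]. }
  exists c'. exact (proj2 (arr_ends E)).
Qed.

End LiftingThroughFactor.

Section QuasiInverse.
Variables (C D : Cat) (F : Functor C D) (Finv : Functor D C)
  (alpha : NatTrans (Fcomp Finv F) (Fid C)).

Lemma alpha_natural (a b : C) (f : Hom a b) :
  comp f (alpha a) = comp (alpha b) (fmap Finv (fmap F f)).
Proof. exact (nt_nat alpha f). Qed.

Lemma faithful_of_left_quasi_inverse : is_natiso alpha -> faithful F.
Proof.
  intros halpha a b f f' E.
  apply (iso_cancel_r (halpha a)). rewrite !alpha_natural, E. reflexivity.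
Qed.

End QuasiInverse.

Lemma full_of_quasi_inverse (C D : Cat) (F : Functor C D) (Finv : Functor D C)
  (alpha : NatTrans (Fcomp Finv F) (Fid C)) (beta : NatTrans (Fcomp F Finv) (Fid D)) :
  is_natiso alpha -> is_natiso beta -> full F.
Proof.
  intros halpha hbeta a b g. destruct (halpha a) as [i [Hi _]]. simpl in i, Hi.
  exists (comp (alpha b) (comp (fmap Finv g) i)).
  apply (faithful_of_left_quasi_inverse hbeta), (iso_cancel_l (halpha b)).
  rewrite <- alpha_natural, <- !comp_assoc. simpl. rewrite Hi, comp_id_r. reflexivity.
Qed.

Lemma bijective_postcomp (A B B' : Type) (f : A -> B) (g : B -> B') (g' : B' -> B) :
  (forall b, g' (g b) = b) -> (forall b', g (g' b') = b') ->
  bijective (fun a => g (f a)) <-> bijective f.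
Proof.
  intros gK g'K. split; intros [inj surj]; split.
  - intros x y E. apply inj. rewrite E. reflexivity.
  - intro b. destruct (surj (g b)) as [a Ha]. exists a.
    rewrite <- (gK (f a)), Ha. apply gK.
  - intros x y E. apply inj. rewrite <- (gK (f x)), E. apply gK.
  - intro b'. destruct (surj (g' b')) as [a Ha]. exists a. rewrite Ha. apply g'K.
Qed.

Lemma corr_iso_of_cat_inverse (C1 C2 C D : Cat) (F : Functor C C1) (G : Functor C C2)
  (F' : Functor D C1) (G' : Functor D C2) (K : Functor C D) (L : Functor D C) :
  Fcomp F' K = F -> Fcomp G' K = G -> cat_inverse K L -> corr_iso F G F' G'.
Proof.
  intros <- <- [LK KL]. exists K, L.
  rewrite <- !Fcomp_assoc, KL, !Fcomp_Fid_r, LK.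
  repeat split; apply functor_eq_refl.
Qed.

Lemma admissible_lifts_isos_uniquely (C1 C2 C : Cat) (F : Functor C C1) (G : Functor C C2) :
  admissible F G -> lifts_isos_uniquely (Fpair F G).
Proof.
  intros [Phi [K [L [EF [EG [_ [_ [ELK EKL]]]]]]]].
  rewrite <- (eq_of_functor_eq EF), <- (eq_of_functor_eq EG), <- Fpair_Fcomp.
  apply (lifts_isos_uniquely_comp_inverse (L := L)).
  - apply graph_lifts_isos_uniquely.
  - split; apply eq_of_functor_eq; assumption.
Qed.

Section Comparison.
Variables (C1 C2 C12 : Cat) (F : Functor C12 C1) (G : Functor C12 C2)
  (Finv : Functor C1 C12)
  (alpha : NatTrans (Fcomp Finv F) (Fid C12)) (halpha : is_natiso alpha)
  (beta : NatTrans (Fcomp F Finv) (Fid C1)) (hbeta : is_natiso beta).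

Definition comparison_ob (c : C12) : GOb (Fcomp G Finv) :=
  @Build_GOb _ _ (Fcomp G Finv) (F c) (G c) (fmap G (alpha c)) (fmap_iso G (halpha c)).

Lemma comparison_hcomm (a b : C12) (f : Hom a b) :
  comp (gpsi (comparison_ob b)) (fmap (Fcomp G Finv) (fmap F f))
  = comp (fmap G f) (gpsi (comparison_ob a)).
Proof. simpl. rewrite <- !fmap_comp. f_equal. symmetry. apply alpha_natural. Qed.

Definition comparison : Functor C12 (GraphCat (Fcomp G Finv)).
Proof.
  refine {| fobj := comparison_ob : C12 -> GraphCat (Fcomp G Finv);
            fmap := fun a b f => @Build_GHom _ _ _ (comparison_ob a) (comparison_ob b)
                                   (fmap F f) (fmap G f) (comparison_hcomm f) |}.
  - intro a. apply GHom_eq; apply fmap_id.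
  - intros a b c f g. apply GHom_eq; apply fmap_comp.
Defined.

Lemma comparison_proj1 : Fcomp (Gproj1 (Fcomp G Finv)) comparison = F.
Proof. apply functor_ext; reflexivity. Qed.

Lemma comparison_proj2 : Fcomp (Gproj2 (Fcomp G Finv)) comparison = G.
Proof. apply functor_ext; reflexivity. Qed.

Lemma comparison_factorization :
  Fcomp (Fpair (Gproj1 (Fcomp G Finv)) (Gproj2 (Fcomp G Finv))) comparison = Fpair F G.
Proof. rewrite Fpair_Fcomp, comparison_proj1, comparison_proj2. reflexivity. Qed.

Lemma comparison_faithful : faithful comparison.
Proof.
  intros a b f f' E.
  exact (faithful_of_left_quasi_inverse halpha (f_equal (fun h => h1 h) E)).
Qed.

Lemma comparison_full : full comparison.
Proof.
  intros a b g. destruct (full_of_quasi_inverse halpha hbeta (h1 g)) as [f Hf].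
  exists f. apply GHom_eq; [exact Hf|]. simpl.
  apply (iso_cancel_r (fmap_iso G (halpha a))).
  rewrite <- fmap_comp, alpha_natural, fmap_comp, Hf. exact (hcomm g).
Qed.

Lemma comparison_essentially_surjective : essentially_surjective comparison.
Proof.
  intros [c1 c2 psi Hpsi].
  destruct (fmap_iso G (halpha (Finv c1))) as [j [Hj Hj']]. simpl in j, Hj, Hj'.
  pose (psi' := comp psi (comp (fmap G (fmap Finv (beta c1))) j)).
  assert (Hcomm : comp psi (fmap (Fcomp G Finv) (beta c1))
                  = comp psi' (fmap G (alpha (Finv c1)))).
  { unfold psi'. rewrite <- !comp_assoc. simpl. rewrite Hj, comp_id_r. reflexivity. }
  exists (Finv c1), (@Build_GHom _ _ _ (comparison_ob (Finv c1))
                       (@Build_GOb _ _ _ c1 c2 psi Hpsi) (beta c1) psi' Hcomm).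
  apply graph_hom_iso; [exact (hbeta c1)|].
  apply iso_comp; [apply iso_comp|exact Hpsi].
  - exists (fmap G (alpha (Finv c1))). split; assumption.
  - exact (fmap_iso G (fmap_iso Finv (hbeta c1))).
Qed.

Definition graph_triple (o : GOb (Fcomp G Finv)) : triples G Finv :=
  existT _ (g1 o) (existT _ (g2 o) (exist _ (gpsi o) (gpsi_iso o))).

Definition triple_graph (t : triples G Finv) : GOb (Fcomp G Finv) :=
  @Build_GOb _ _ (Fcomp G Finv) (projT1 t) (projT1 (projT2 t))
    (proj1_sig (projT2 (projT2 t))) (proj2_sig (projT2 (projT2 t))).

Lemma triple_map_bijectiveE :
  bijective (triple_map G halpha) <-> bijective (fobj comparison).
Proof.
  apply (bijective_postcomp (fobj comparison) (g := graph_triple) (g' := triple_graph)).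
  - intros [? ? ? ?]. reflexivity.
  - intros [? [? [? ?]]]. reflexivity.
Qed.

Lemma triple_map_bijective_of_lifting :
  lifts_isos_uniquely (Fpair F G) -> bijective (triple_map G halpha).
Proof.
  intro HH.
  rewrite <- comparison_factorization in HH.
  apply triple_map_bijectiveE. split.
  - exact (injective_of_lifts_isos_uniquely HH comparison_full comparison_faithful).
  - exact (surjective_of_lifts_isos_uniquely (graph_lifts_isos_uniquely (Phi := _)) HH
             comparison_essentially_surjective).
Qed.

Lemma admissible_of_triple_map_bijective :
  bijective (triple_map G halpha) -> admissible F G.
Proof.
  intro Hbij. apply triple_map_bijectiveE in Hbij.
  exists (Fcomp G Finv).
  exact (corr_iso_of_cat_inverse comparison_proj1 comparison_proj2
           (inverse_functor_cat_inverse Hbij comparison_full comparison_faithful)).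
Qed.

End Comparison.

Theorem lemma4p6p5 (C1 C2 C12 : Cat) (F : Functor C12 C1) (G : Functor C12 C2)
  (Finv : Functor C1 C12)
  (alpha : NatTrans (Fcomp Finv F) (Fid C12)) (halpha : is_natiso alpha)
  (beta : NatTrans (Fcomp F Finv) (Fid C1)) (hbeta : is_natiso beta) :
  (admissible F G <-> bijective (triple_map G halpha)) /\
  (bijective (triple_map G halpha) <-> unique_iso_lifting (Fpair F G)).
Proof.
  pose proof (unique_iso_liftingE (Fpair F G)) as c_iff.
  pose proof (admissible_lifts_isos_uniquely (F := F) (G := G)) as a_c.
  pose proof (triple_map_bijective_of_lifting (G := G) halpha hbeta) as c_b.
  pose proof (admissible_of_triple_map_bijective (G := G) (halpha := halpha) hbeta) as b_a.
  tauto.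
Qed.
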